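(* Under the assumptions in the context, the discrete solution set $\mathcal M^\delta:=\{u^\delta_\mu:\mu\in\mathcal P\}$ is a compact subset of $\widehat{\mathcal X^\delta}:=(B^1)^*(\mathcal Y^\delta)+\dots+(B^{Q_b})^*(\mathcal Y^\delta)\subset L_2(\Omega)$, where $u_\mu^\delta\in\mathcal X_\mu^\delta:=B_\mu^*(\mathcal Y^\delta)$ is the unique solution of $(u^\delta_\mu,B_\mu^*v)_{L_2(\Omega)}=f_\mu(v)$ for all $v\in\mathcal Y^\delta$.
   Context: Let $\Omega\subset\mathbb R^n$ be a bounded polyhedral Lipschitz domain with outward normal $\vec n$, and $\mathcal P\subset\mathbb R^p$ compact. For each $\mu\in\mathcal P$ let $\vec b_\mu\in C^1(\bar\Omega)^n$, $c_\mu\in C^0(\bar\Omega)$ with $c_\mu-\tfrac12\nabla\cdot\vec b_\mu\ge0$, with $\mu$-independent $\Gamma_\pm=\{z\in\partial\Omega:\vec b_\mu\cdot\vec n\gtrless0\}$, and such that $B_{\mu;\circ}^*w:=-\vec b_\mu\cdot\nabla w+w(c_\mu-\nabla\cdot\vec b_\mu)$ on $C^1_{\Gamma_+}(\Omega):=\{v\in C^0(\bar\Omega)\cap C^1(\Omega):v|_{\Gamma_+}=0\}$ is injective with dense range in $L_2(\Omega)$. Let $\mathcal Y_\mu$ be the closure of $C^1_{\Gamma_+}(\Omega)$ under $\|v\|_{\mathcal Y_\mu}:=\|B^*_{\mu;\circ}v\|_{L_2(\Omega)}$, $B_\mu^*$ the continuous extension, $\bar{\mathcal Y}:=\bigcap_\mu\mathcal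 Y_\mu$ (dense in each $\mathcal Y_\mu$) with norm $\|v\|_{\bar{\mathcal Y}}:=\sup_\mu\|v\|_{\mathcal Y_\mu}$. Assume affine decompositions $B_\mu^*=\sum_{q=1}^{Q_b}\theta_b^q(\mu)(B^q)^*$, $f_\mu=\sum_{q=1}^{Q_f}\theta_f^q(\mu)f^q$ with $\theta^q_b,\theta^q_f\in C^0(\mathcal P)$, $(B^q)^*\in\mathcal L(\bar{\mathcal Y},L_2(\Omega))$, $f^q\in\bar{\mathcal Y}'$, and $f_\mu\in\mathcal Y_\mu'$ for all $\mu$ with $\sup_\mu\|f_\mu\|_{\mathcal Y_\mu'}<\infty$. Let $\mathcal Y^\delta\subset\bar{\mathcal Y}$ be a $\mu$-independent finite-dimensional subspace; $\widehat{\mathcal X^\delta}$ is equipped with the $L_2(\Omega)$ inner product. *)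

From HB Require Import structures.
From mathcomp Require Import all_boot all_order all_algebra.
From mathcomp Require Import all_classical all_reals all_analysis.
Set Implicit Arguments. Unset Strict Implicit. Unset Printing Implicit Defensive.
Import Order.TTheory GRing.Theory Num.Theory.
Import numFieldNormedType.Exports.
Local Open Scope classical_set_scope.
Local Open Scope ring_scope.

Definition is_linear_map (R : realType) (U V : lmodType R) (f : U -> V) : Prop :=
  forall (a : R) (x y : U), f (a *: x + y) = a *: f x + f y.

Definition is_linear_form (R : realType) (U : lmodType R) (f : U -> R) : Prop :=
  forall (a : R) (x y : U), f (a *: x + y) = a * f x + f y.

(* A (real) inner product on H inducing the norm of H:
   this models L_2(Omega) with its L_2 inner product. *)
Definition inner_product_of_norm (R : realType) (H : normedModType R)
    (ip : H -> H -> R) : Prop :=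
  [/\ forall x y, ip x y = ip y x,
      forall (a : R) x y z, ip (a *: x + y) z = a * ip x z + ip y z
    & forall x, ip x x = `|x| ^+ 2].

Definition span_of (R : realType) (Y : lmodType R) (m : nat) (e : 'I_m -> Y)
  : set Y := [set v | exists c : 'I_m -> R, v = \sum_(i < m) c i *: e i].

(* Affine combination  B_mu^* v = sum_q theta_b^q(mu) (B^q)^* v. *)
Definition affine_op (R : realType) (p Q : nat) (Y H : lmodType R)
    (theta : 'I_Q -> 'rV[R]_p -> R) (B : 'I_Q -> Y -> H) (mu : 'rV[R]_p) (v : Y)
  : H := \sum_(q < Q) theta q mu *: B q v.

Definition affine_form (R : realType) (p Q : nat) (Y : lmodType R)
    (theta : 'I_Q -> 'rV[R]_p -> R) (f : 'I_Q -> Y -> R) (mu : 'rV[R]_p) (v : Y)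
  : R := \sum_(q < Q) theta q mu * f q v.

Definition X_delta (R : realType) (p Q : nat) (Y H : lmodType R)
    (theta : 'I_Q -> 'rV[R]_p -> R) (B : 'I_Q -> Y -> H) (Yd : set Y)
    (mu : 'rV[R]_p) : set H :=
  (affine_op theta B mu) @` Yd.

Definition Xhat_delta (R : realType) (Q : nat) (Y H : lmodType R)
    (B : 'I_Q -> Y -> H) (Yd : set Y) : set H :=
  [set u | exists w : 'I_Q -> Y, (forall q, Yd (w q)) /\ u = \sum_(q < Q) B q (w q)].

(* Extract from e a linearly independent family b spanning Y^delta.  For mu in P the discrete
   solution is u_mu = sum_i c_i g_mu,i with g_mu,i := B_mu^* b_i; as B_mu^* is injective the
   g_mu,i are independent, so kappa |d| <= |sum_i d_i g_mu,i| for coefficient vectors d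
   (minimum of a continuous function on the compact unit sphere of R^k).  Testing the Galerkin
   equations at mu and nu against c_nu - c_mu gives a local Lipschitz bound on |u_mu - u_nu| in
   terms of the perturbations |g_nu,i - g_mu,i| and |f_nu(b_i) - f_mu(b_i)|, which vanish as
   nu -> mu by continuity of the theta's.  So mu |-> u_mu is continuous on the compact P, and its
   image lies in hat X^delta because B_mu^* v = sum_q (B^q)^* (theta_b^q(mu) v). *)

From HB Require Import structures.
From mathcomp Require Import all_boot all_order all_algebra.
From mathcomp Require Import all_classical all_reals all_analysis.
Import Order.TTheory GRing.Theory Num.Theory.
Import numFieldNormedType.Exports.
Local Open Scope classical_set_scope.
Local Open Scope ring_scope.
From mathcomp Require Import ring lra.
Set Implicit Arguments. Unset Strict Implicit. Unset Printing Implicit Defensive.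

Section LinearCombinations.
Variable R : realType.

Definition lincomb (V : lmodType R) k (g : 'I_k -> V) (d : 'rV[R]_k) : V :=
  \sum_(i < k) d ord0 i *: g i.

Lemma lincomb_is_linear (V : lmodType R) k (g : 'I_k -> V) :
  linear (lincomb g).
Proof.
move=> a d d'; rewrite /lincomb scaler_sumr -big_split /=.
by apply: eq_bigr => i _; rewrite !mxE scalerDl scalerA.
Qed.

HB.instance Definition _ (V : lmodType R) k (g : 'I_k -> V) :=
  GRing.isLinear.Build R 'rV[R]_k V *:%R (lincomb g) (lincomb_is_linear g).

Lemma lincombBl (V : lmodType R) k (g g' : 'I_k -> V) d :
  lincomb g d - lincomb g' d = lincomb (fun i => g i - g' i) d.
Proof. by rewrite /lincomb -sumrB; apply: eq_bigr => i _; rewrite scalerBr. Qed.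

Definition free_family (V : lmodType R) k (g : 'I_k -> V) :=
  forall d, lincomb g d = 0 -> d = 0.

Section LinearMap.
Variables (U V : lmodType R) (L : U -> V).
Hypothesis hL : is_linear_map L.
Let Lin : {linear U -> V} := HB.pack L (GRing.isLinear.Build R U V *:%R L hL).

Lemma is_linear_map0 : L 0 = 0.
Proof. exact: (linear0 Lin). Qed.

Lemma is_linear_mapZ a x : L (a *: x) = a *: L x.
Proof. by rewrite -[L _]/(Lin _) linearZ. Qed.

Lemma is_linear_map_lincomb k (b : 'I_k -> U) d :
  L (lincomb b d) = lincomb (L \o b) d.
Proof.
by rewrite -[L _]/(Lin _) linear_sum; apply: eq_bigr => i _; rewrite linearZ.
Qed.

Lemma free_family_comp k (b : 'I_k -> U) :
  injective L -> free_family b -> free_family (L \o b).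
Proof.
move=> Linj bfree d; rewrite -is_linear_map_lincomb -is_linear_map0.
by move/Linj; apply: bfree.
Qed.

End LinearMap.

Lemma is_linear_map_affine_op p Q (Y V : lmodType R)
    (theta : 'I_Q -> 'rV[R]_p -> R) (B : 'I_Q -> Y -> V) mu :
  (forall q, is_linear_map (B q)) -> is_linear_map (affine_op theta B mu).
Proof.
move=> hB a x y; rewrite /affine_op scaler_sumr -big_split /=.
by apply: eq_bigr => q _; rewrite hB scalerDr !scalerA mulrC.
Qed.

Lemma span_ofE (V : lmodType R) k (b : 'I_k -> V) : span_of b = range (lincomb b).
Proof.
apply/seteqP; split => [v [c ->]|_ [d _ <-]].
  by exists (\row_i c i) => //; apply: eq_bigr => i _; rewrite mxE.
by exists (fun i => d ord0 i).
Qed.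

Lemma span_ofZ (V : lmodType R) k (b : 'I_k -> V) a v :
  span_of b v -> span_of b (a *: v).
Proof. by rewrite span_ofE => -[d _ <-]; exists (a *: d) => //; rewrite linearZ. Qed.

Lemma span_of_sub (V : lmodType R) m k (e : 'I_m -> V) (b : 'I_k -> V) :
  (forall i, span_of e (b i)) -> span_of b `<=` span_of e.
Proof.
rewrite !span_ofE => hb _ [d _ <-].
have /choice[C hC] : forall i, exists c, lincomb e c = b i.
  by move=> i; have [c _ <-] := hb i; exists c.
exists (\sum_(i < k) d ord0 i *: C i) => //.
by rewrite linear_sum; apply: eq_bigr => i _; rewrite linearZ -hC.
Qed.

Lemma span_of_gen (V : lmodType R) k (b : 'I_k -> V) j : span_of b (b j).
Proof.
rewrite span_ofE; exists (delta_mx 0 j) => //.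
rewrite /lincomb (bigD1 j) //= mxE !eqxx scale1r big1 ?addr0 // => i /negbTE ij.
by rewrite mxE ij andbF scale0r.
Qed.

Definition rcons_fam (V : lmodType R) k (b : 'I_k -> V) (x : V) (j : 'I_k.+1) : V :=
  if unlift ord_max j is Some i then b i else x.

Lemma rcons_fam_lift (V : lmodType R) k (b : 'I_k -> V) x i :
  rcons_fam b x (lift ord_max i) = b i.
Proof. by rewrite /rcons_fam liftK. Qed.

Lemma rcons_fam_max (V : lmodType R) k (b : 'I_k -> V) x : rcons_fam b x ord_max = x.
Proof. by rewrite /rcons_fam unlift_none. Qed.

Lemma lincomb_rcons_fam (V : lmodType R) k (b : 'I_k -> V) x d :
  lincomb (rcons_fam b x) d
    = lincomb b (\row_i d ord0 (lift ord_max i)) + d ord0 ord_max *: x.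
Proof.
rewrite /lincomb big_ord_recr rcons_fam_max; congr (_ + _).
apply: eq_bigr => i _; have -> : widen_ord (leqnSn k) i = lift ord_max i.
  exact/val_inj/esym/lift_max.
by rewrite mxE rcons_fam_lift.
Qed.

Lemma free_rcons_fam (V : lmodType R) k (b : 'I_k -> V) x :
  free_family b -> ~ span_of b x -> free_family (rcons_fam b x).
Proof.
move=> b_free x_out d; rewrite lincomb_rcons_fam; set d0 := \row_i _ => hd.
have dmax : d ord0 ord_max = 0.
  apply: contra_notP x_out => /eqP dmax_neq0; rewrite span_ofE.
  exists (- (d ord0 ord_max)^-1 *: d0) => //; rewrite linearZ /=.
  apply: (scalerI dmax_neq0); rewrite scalerA mulrN mulfV // scaleN1r.
  by apply/eqP; rewrite eq_sym -addr_eq0 addrC hd.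
move: hd; rewrite dmax scale0r addr0 => /b_free /rowP d0_0.
apply/rowP => j; rewrite mxE; case: (unliftP ord_max j) => [i ->|-> //].
by have := d0_0 i; rewrite !mxE.
Qed.

Lemma exists_free_spanning_family (V : lmodType R) m (e : 'I_m -> V) :
  exists k (b : 'I_k -> V), free_family b /\ span_of b = span_of e.
Proof.
elim: m e => [|m IH] e.
  by exists 0, e; split => // d _; apply/rowP => -[].
have [k [b [b_free b_span]]] := IH (e \o lift ord_max).
have b_sub : span_of b `<=` span_of e.
  by rewrite b_span; apply: span_of_sub => i; apply: span_of_gen.
have e_sub b' : (forall i, span_of b' (b i)) -> span_of b' (e ord_max) ->
    span_of e `<=` span_of b'.
  move=> b_in emax_in; apply: span_of_sub => j.
  case: (unliftP ord_max j) => [i ->|-> //].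
  by apply: span_of_sub b_in _ _; rewrite b_span; apply: (span_of_gen (e \o lift ord_max)).
have [emax_in|emax_out] := pselect (span_of b (e ord_max)).
  exists k, b; split => //; apply/seteqP; split => //.
  by apply: e_sub => // i; apply: span_of_gen.
exists k.+1, (rcons_fam b (e ord_max)); split; first exact: free_rcons_fam.
apply/seteqP; split.
  apply: span_of_sub => j; case: (unliftP ord_max j) => [i ->|->].
    by rewrite rcons_fam_lift; apply: b_sub; apply: span_of_gen.
  by rewrite rcons_fam_max; apply: span_of_gen.
apply: e_sub => [i|]; first by rewrite -(rcons_fam_lift b (e ord_max)); apply: span_of_gen.
by have := span_of_gen (rcons_fam b (e ord_max)) ord_max; rewrite rcons_fam_max.
Qed.

End LinearCombinations.

Section Norms.
Variable R : realType.

Lemma cvg_sum (T : Type) (F : set_system T) {FF : Filter F}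
    (V : normedModType R) (I : Type) (r : seq I) (f : I -> T -> V) (l : I -> V) :
  (forall i, f i x @[x --> F] --> l i) ->
  \sum_(i <- r) f i x @[x --> F] --> \sum_(i <- r) l i.
Proof. by move=> fl; apply: cvg_big => [|i _]; [exact: add_continuous | exact: fl]. Qed.

Lemma norm_coord_le k (d : 'rV[R]_k) i : `|d ord0 i| <= `|d|.
Proof. by rewrite [leRHS]mx_normrE (le_bigmax _ _ (ord0, i)). Qed.

Definition fam_dist (V : normedModType R) k (g g' : 'I_k -> V) : R :=
  \sum_(i < k) `|g' i - g i|.

Lemma fam_dist_ge0 (V : normedModType R) k (g g' : 'I_k -> V) : 0 <= fam_dist g g'.
Proof. by apply: sumr_ge0 => i _; apply: normr_ge0. Qed.

Lemma norm_lincomb_le (V : normedModType R) k (g : 'I_k -> V) d :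
  `|lincomb g d| <= `|d| * \sum_(i < k) `|g i|.
Proof.
rewrite mulr_sumr; apply: le_trans (ler_norm_sum _ _ _) _.
by apply: ler_sum => i _; rewrite normrZ ler_wpM2r ?norm_coord_le.
Qed.

Lemma norm_lincomb_sub_le (V : normedModType R) k (g g' : 'I_k -> V) d :
  `|lincomb g' d - lincomb g d| <= `|d| * fam_dist g g'.
Proof. by rewrite lincombBl; apply: norm_lincomb_le. Qed.

Lemma lincomb_continuous (V : normedModType R) k (g : 'I_k -> V) :
  continuous (lincomb g).
Proof.
by move=> d; apply: (@cvg_sum _ (nbhs d)) => i; apply: cvgZr_tmp; apply: coord_continuous.
Qed.

Lemma free_lincomb_lower_bound (V : normedModType R) k (g : 'I_k -> V) :
  free_family g -> exists2 kap, 0 < kap & forall d, kap * `|d| <= `|lincomb g d|.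
Proof.
case: k g => [|k] g gfree.
  by exists 1 => // d; rewrite (thinmx0 d) normr0 mulr0.
pose S := [set d : 'rV[R]_k.+1 | `|d| = 1].
have S_normalize d : d != 0 -> S (`|d|^-1 *: d) by move=> d0; apply: normfZV.
have S_compact : compact S.
  apply: bounded_closed_compact.
    by exists 1; split => // M M1 d /= ->; apply: ltW.
  apply: (@preimage_closed _ _ (fun d : 'rV[R]_k.+1 => `|d|) [set x : R | x = 1]).
    by move=> d _; apply: norm_continuous.
  exact: closed_eq.
have S_nonempty : S !=set0.
  have one_neq0 : const_mx 1 != 0 :> 'rV[R]_k.+1.
    by apply/negP => /eqP/rowP/(_ ord0)/eqP; rewrite !mxE oner_eq0.
  by eexists; apply: S_normalize one_neq0.
have norm_lincomb_cont : continuous (fun d => `|lincomb g d|).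
  by move=> d; apply: continuous_comp; [exact: lincomb_continuous | exact: norm_continuous].
have [d0 /set_mem S_d0 d0_min] :=
  compact_EVT_min S_nonempty S_compact (continuous_subspaceT norm_lincomb_cont).
exists `|lincomb g d0|.
  rewrite normr_gt0; apply: contraPneq S_d0 => /gfree ->.
  by rewrite /S /= normr0 => /esym/eqP; rewrite oner_eq0.
move=> d; have [->|d_neq0] := eqVneq d 0; first by rewrite normr0 mulr0.
have /d0_min := mem_set (S_normalize d d_neq0).
by rewrite linearZ normrZ normrV ?unitfE ?normr_eq0 // normr_id ler_pdivlMl ?normr_gt0 // mulrC.
Qed.

Lemma lincomb_lower_bound_perturb (V : normedModType R) k
    (g g' : 'I_k -> V) kap :
  (forall d, kap * `|d| <= `|lincomb g d|) -> fam_dist g g' <= kap / 2 ->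
  forall d, kap / 2 * `|d| <= `|lincomb g' d|.
Proof.
move=> g_lb small d.
have near_g : `|lincomb g' d - lincomb g d| <= `|d| * (kap / 2).
  by apply: le_trans (norm_lincomb_sub_le g g' d) _; rewrite ler_wpM2l.
have := ler_normB (lincomb g' d) (lincomb g' d - lincomb g d).
rewrite subKr; have := g_lb d; lra.
Qed.

Lemma fam_dist_cvg0 (V : normedModType R) (T : Type) (F : set_system T)
    {FF : Filter F} k (g : T -> 'I_k -> V) g0 :
  (forall i, g t i @[t --> F] --> g0 i) -> fam_dist g0 (g t) @[t --> F] --> 0.
Proof.
move=> g_cvg; have -> : 0 = \sum_(i < k) `|g0 i - g0 i| :> R.
  by rewrite big1 // => i _; rewrite subrr normr0.
by apply: cvg_sum => i; apply: cvg_norm; apply: cvgB => //; apply: cvg_cst.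
Qed.

End Norms.

Lemma le_of_mulr_le (R : realDomainType) (x y : R) : 0 <= y -> x * x <= x * y -> x <= y.
Proof.
move=> y_ge0; have [x_le0|x_gt0] := lerP x 0; first by move=> _; apply: le_trans y_ge0.
by rewrite ler_pM2l.
Qed.

Section GalerkinProjection.
Variables (R : realType) (H : normedModType R) (ip : H -> H -> R).
Hypothesis hip : inner_product_of_norm ip.

Lemma ipC x y : ip x y = ip y x. Proof. by case: hip. Qed.

Lemma ip_norm x : ip x x = `|x| ^+ 2. Proof. by case: hip. Qed.

Let ip_linear z : is_linear_map (fun x => ip x z : R^o).
Proof. by case: hip => _ ip_lin _ a x y; apply: ip_lin. Qed.

Let ipl z : {linear H -> R^o} :=
  HB.pack (ip ^~ z) (GRing.isLinear.Build R H R^o *:%R (ip ^~ z) (ip_linear z)).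

Lemma ipDl x y z : ip (x + y) z = ip x z + ip y z.
Proof. exact: (linearD (ipl z)). Qed.

Lemma ipBl x y z : ip (x - y) z = ip x z - ip y z.
Proof. exact: (linearB (ipl z)). Qed.

Lemma ipNl x z : ip (- x) z = - ip x z.
Proof. exact: (linearN (ipl z)). Qed.

Lemma ipDr x y z : ip z (x + y) = ip z x + ip z y.
Proof. by rewrite ipC ipDl !(ipC z). Qed.

Lemma ipBr x y z : ip z (x - y) = ip z x - ip z y.
Proof. by rewrite ipC ipBl !(ipC z). Qed.

Lemma ip_le x y : ip x y <= `|x| * `|y|.
Proof.
have polar : 4 * ip x y = `|x + y| ^+ 2 - `|x - y| ^+ 2.
  by rewrite -!ip_norm ipBl ipDl !ipBr !ipDr (ipC y x); ring.
have sum_le : `|x + y| ^+ 2 <= (`|x| + `|y|) ^+ 2.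
  by rewrite lerXn2r ?nnegrE ?addr_ge0 ?ler_normD.
have diff_ge : (`|x| - `|y|) ^+ 2 <= `|x - y| ^+ 2.
  by rewrite -real_normK ?num_real // lerXn2r ?nnegrE ?ler_dist_dist.
rewrite -(ler_pM2l (_ : 0 < 4)) // polar; nra.
Qed.

Lemma normr_ip_le x y : `|ip x y| <= `|x| * `|y|.
Proof.
by rewrite ler_norml ip_le andbT lerNl -ipNl -(normrN x) ip_le.
Qed.

Definition galerkin_sol k (g : 'I_k -> H) (F : 'I_k -> R) (w : H) : Prop :=
  (exists c, w = lincomb g c) /\ forall d, ip w (lincomb g d) = lincomb F d.

(* Testing both Galerkin systems against d := c' - c splits |g' d|^2 into a load defect, the
   basis defect tested by the first solution, and the basis defect tested by g' d. *)
Lemma galerkin_perturb_sq_le k (g g' : 'I_k -> H) (F F' : 'I_k -> R) c c' :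
  (forall d, ip (lincomb g c) (lincomb g d) = lincomb F d) ->
  (forall d, ip (lincomb g' c') (lincomb g' d) = lincomb F' d) ->
  `|lincomb g' (c' - c)| ^+ 2 <=
    `|c' - c| * fam_dist F F' + `|lincomb g c| * (`|c' - c| * fam_dist g g')
    + `|c| * fam_dist g g' * `|lincomb g' (c' - c)|.
Proof.
move=> galg galg'; set d := c' - c; set w := lincomb g c; set v := lincomb g' c.
have -> : `|lincomb g' d| ^+ 2 = (lincomb F' d - lincomb F d)
    + ip w (lincomb g d - lincomb g' d) + ip (w - v) (lincomb g' d).
  have gd_eq : lincomb g' d = lincomb g' c' - v by rewrite linearB.
  by rewrite -ip_norm {1}gd_eq ipBl galg' -galg ipBr ipBl; ring.
apply: le_trans (ler_norm _) _; apply: le_trans (ler_normD _ _) _.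
apply: lerD; first apply: le_trans (ler_normD _ _) _; first apply: lerD.
- exact: norm_lincomb_sub_le.
- apply: le_trans (normr_ip_le _ _) _; rewrite ler_wpM2l // -normrN opprB.
  exact: norm_lincomb_sub_le.
- apply: le_trans (normr_ip_le _ _) _.
  by rewrite ler_wpM2r // -normrN opprB; apply: norm_lincomb_sub_le.
Qed.

Lemma galerkin_dist_le k (g g' : 'I_k -> H) (F F' : 'I_k -> R) c w' kap :
  0 < kap -> (forall d, kap * `|d| <= `|lincomb g d|) ->
  (forall d, ip (lincomb g c) (lincomb g d) = lincomb F d) ->
  galerkin_sol g' F' w' -> fam_dist g g' <= kap / 2 ->
  `|lincomb g c - w'| <=
    (fam_dist g g' + fam_dist F F') * (2 * (1 + `|lincomb g c|) / kap + 2 * `|c|).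
Proof.
move=> kap_gt0 g_lb galg [[c' ->] galg'] small.
have a_sq := galerkin_perturb_sq_le galg galg'.
set w := lincomb g c in a_sq *; set E1 := fam_dist g g' in a_sq *.
set E2 := fam_dist F F' in a_sq *; set d := c' - c in a_sq *.
set a := `|lincomb g' d| in a_sq *.
have d_le : `|d| <= 2 / kap * a.
  have := lincomb_lower_bound_perturb g_lb small d.
  by rewrite mulrAC ler_pdivrMr // [_ * a]mulrC mulrA ler_pdivlMr // (mulrC `|d|).
have E1_ge0 : 0 <= E1 := fam_dist_ge0 g g'.
have E2_ge0 : 0 <= E2 := fam_dist_ge0 F F'.
have a_ge0 : 0 <= a := normr_ge0 _.
have t_ge0 : 0 <= 2 / kap by rewrite divr_ge0 // ltW.
have a_le : a <= (E1 + E2) * (2 / kap * (1 + `|w|) + `|c|).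
  apply: le_of_mulr_le.
    by rewrite mulr_ge0 ?addr_ge0 // mulr_ge0 // addr_ge0.
  rewrite -expr2; apply: le_trans a_sq _.
  have := ler_wpM2r E2_ge0 d_le; have := ler_wpM2l (normr_ge0 w) (ler_wpM2r E1_ge0 d_le).
  have := mulr_ge0 (mulr_ge0 t_ge0 a_ge0) E1_ge0.
  have := mulr_ge0 (mulr_ge0 (mulr_ge0 t_ge0 (normr_ge0 w)) a_ge0) E2_ge0.
  have := mulr_ge0 (mulr_ge0 (normr_ge0 c) a_ge0) E2_ge0.
  lra.
have v_near : `|lincomb g' c - w| <= `|c| * E1 by apply: norm_lincomb_sub_le.
have -> : w - lincomb g' c' = - ((lincomb g' c - w) + lincomb g' d).
  by rewrite linearB /= [(_ - w) + _]addrC subrKA opprB.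
rewrite normrN; apply: le_trans (ler_normD _ _) _.
rewrite -/a; have := mulr_ge0 (normr_ge0 c) E2_ge0; lra.
Qed.

Lemma galerkin_sol_cvg (T : Type) (F : set_system T) {FF : Filter F} k
    (g : T -> 'I_k -> H) (L : T -> 'I_k -> R) (w : T -> H) g0 L0 w0 :
  free_family g0 -> galerkin_sol g0 L0 w0 ->
  (forall i, g t i @[t --> F] --> g0 i) -> (forall i, L t i @[t --> F] --> L0 i) ->
  (\forall t \near F, galerkin_sol (g t) (L t) (w t)) ->
  w t @[t --> F] --> w0.
Proof.
move=> g0_free [[c ->] gal0] g_cvg L_cvg sol_near.
have [kap kap_gt0 g0_lb] := free_lincomb_lower_bound g0_free.
pose E t := fam_dist g0 (g t) + fam_dist L0 (L t).
have E_cvg : E t @[t --> F] --> 0.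
  by rewrite -[0]addr0; apply: cvgD; apply: fam_dist_cvg0.
pose M := 2 * (1 + `|lincomb g0 c|) / kap + 2 * `|c|.
have M_gt0 : 0 < M.
  by rewrite ltr_wpDr ?mulr_ge0 // divr_gt0 // mulr_gt0 // ltr_wpDr.
apply/cvgrPdist_le => eps eps_gt0.
have delta_gt0 : 0 < Num.min (kap / 2) (eps / M) by rewrite lt_min !divr_gt0.
have E_small : \forall t \near F, E t <= Num.min (kap / 2) (eps / M).
  move/cvgr0Pnorm_le: E_cvg => /(_ _ delta_gt0).
  by apply: filterS => t; apply: le_trans; apply: ler_norm.
apply: filterS2 sol_near E_small => t sol_t; rewrite le_min => /andP[E_le1 E_le2].
have g_small : fam_dist g0 (g t) <= kap / 2.
  by apply: le_trans E_le1; rewrite lerDl fam_dist_ge0.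
apply: le_trans (galerkin_dist_le kap_gt0 g0_lb gal0 sol_t g_small) _.
by rewrite -ler_pdivlMr.
Qed.

End GalerkinProjection.

Lemma affine_op_continuous (R : realType) p Q (Y : lmodType R) (V : normedModType R)
    (P : set 'rV[R]_p) (theta : 'I_Q -> 'rV[R]_p -> R) (B : 'I_Q -> Y -> V) v :
  (forall q, {within P, continuous theta q}) ->
  {within P, continuous (fun mu => affine_op theta B mu v)}.
Proof. by move=> theta_cont mu; apply: cvg_sum => q; apply: cvgZr_tmp; apply: theta_cont. Qed.

Lemma X_delta_sub_Xhat_delta (R : realType) p Q (Y V : lmodType R)
    (theta : 'I_Q -> 'rV[R]_p -> R) (B : 'I_Q -> Y -> V) (Yd : set Y) mu :
  (forall q, is_linear_map (B q)) -> (forall a v, Yd v -> Yd (a *: v)) ->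
  X_delta theta B Yd mu `<=` Xhat_delta B Yd.
Proof.
move=> B_lin YdZ _ [v Yd_v <-]; exists (fun q => theta q mu *: v); split => [q|].
  exact: YdZ.
by apply: eq_bigr => q _; rewrite is_linear_mapZ.
Qed.

Lemma galerkin_solution_continuous (R : realType) (H : normedModType R)
    (ip : H -> H -> R) (Y : lmodType R) p (P : set 'rV[R]_p) (Qb Qf : nat)
    (theta_b : 'I_Qb -> 'rV[R]_p -> R) (theta_f : 'I_Qf -> 'rV[R]_p -> R)
    (B : 'I_Qb -> Y -> H) (f : 'I_Qf -> Y -> R) m (e : 'I_m -> Y) (u : 'rV[R]_p -> H) :
  inner_product_of_norm ip ->
  (forall q, {within P, continuous theta_b q}) ->
  (forall q, {within P, continuous theta_f q}) ->
  (forall q, is_linear_map (B q)) -> (forall q, is_linear_form (f q)) ->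
  (forall mu, P mu -> injective (affine_op theta_b B mu)) ->
  (forall mu, P mu ->
      X_delta theta_b B (span_of e) mu (u mu) /\
      (forall v, span_of e v ->
         ip (u mu) (affine_op theta_b B mu v) = affine_form theta_f f mu v)) ->
  {within P, continuous u}.
Proof.
move=> hip theta_b_cont theta_f_cont B_lin f_lin B_inj hu.
have [k [b [b_free b_span]]] := exists_free_spanning_family e.
have T_lin mu : is_linear_map (affine_op theta_b B mu) by apply: is_linear_map_affine_op.
have F_lin mu : is_linear_map (affine_form theta_f f mu : Y -> R^o).
  exact: (is_linear_map_affine_op (V := R^o)).
pose g mu := affine_op theta_b B mu \o b.
pose L mu := affine_form theta_f f mu \o b.
have sol mu : P mu -> galerkin_sol ip (g mu) (L mu) (u mu).
  move=> Pmu; have [[v e_v <-] gal] := hu mu Pmu; split.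
    move: e_v; rewrite -b_span span_ofE => -[c _ <-].
    by exists c; rewrite is_linear_map_lincomb.
  move=> d; rewrite -is_linear_map_lincomb // gal; first exact: is_linear_map_lincomb.
  by rewrite -b_span span_ofE; exists d.
rewrite continuous_subspace_in => mu /set_mem Pmu.
apply: (galerkin_sol_cvg hip _ (sol mu Pmu)).
- exact: free_family_comp (B_inj mu Pmu) b_free.
- by move=> i; apply: affine_op_continuous.
- by move=> i; apply: (affine_op_continuous (V := R^o)).
- apply: filterS (sol) _.
  by rewrite /nbhs /= -(nbhs_subspace_in Pmu); apply: withinT.
Qed.

Theorem corollary4p5
  (R : realType)
  (* H models L_2(Omega), with its inner product ip *)
  (H : normedModType R) (ip : H -> H -> R)
  (hip : inner_product_of_norm ip)
  (* Ybar = intersection of the Y_mu, normed with sup_mu ||.||_{Y_mu} *)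
  (Ybar : normedModType R)
  (p : nat) (P : set 'rV[R]_p) (hP : compact P)
  (Qb Qf : nat)
  (theta_b : 'I_Qb -> 'rV[R]_p -> R) (theta_f : 'I_Qf -> 'rV[R]_p -> R)
  (htheta_b : forall q, {within P, continuous theta_b q})
  (htheta_f : forall q, {within P, continuous theta_f q})
  (B : 'I_Qb -> Ybar -> H)
  (hB_lin : forall q, is_linear_map (B q))
  (hB_cont : forall q, continuous (B q))
  (f : 'I_Qf -> Ybar -> R)
  (hf_lin : forall q, is_linear_form (f q))
  (hf_cont : forall q, continuous (f q))
  (* ||v||_{Y_mu} = ||B_mu^* v||_{L_2} is a norm: B_mu^* is injective *)
  (hB_inj : forall mu, P mu -> injective (affine_op theta_b B mu))
  (hYnorm : forall v : Ybar,
      `|v| = sup [set `|affine_op theta_b B mu v| | mu in P])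
  (* f_mu in Y_mu' uniformly: sup_mu ||f_mu||_{Y_mu'} < oo *)
  (hf_bnd : exists C : R, forall mu, P mu -> forall v : Ybar,
      `|affine_form theta_f f mu v| <= C * `|affine_op theta_b B mu v|)
  (* Y^delta is the span of e *)
  (m : nat) (e : 'I_m -> Ybar)
  (u : 'rV[R]_p -> H)
  (hu : forall mu, P mu ->
      X_delta theta_b B (span_of e) mu (u mu) /\
      (forall v, span_of e v ->
         ip (u mu) (affine_op theta_b B mu v) = affine_form theta_f f mu v)) :
  compact (u @` P) /\ u @` P `<=` Xhat_delta B (span_of e).
Proof.
split.
  apply: continuous_compact hP.
  exact: (galerkin_solution_continuous hip htheta_b htheta_f hB_lin hf_lin hB_inj hu).
move=> _ [mu Pmu <-]; apply: (X_delta_sub_Xhat_delta hB_lin).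
  by move=> a v; apply: span_ofZ.
exact: (hu mu Pmu).1.
Qed.
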